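(* Let $\mathcal{K}_{w,F}$ be an oriented folded ribbon knot. At a fold with fold angle $0<\theta<\pi$, there are two intersection points between the ribbon's boundary and the knot diagram, and both contribute the same sign to the ribbon linking number, namely: left underfold $+1$; left overfold $-1$; right underfold $-1$; right overfold $+1$.
   Context: For a polygonal knot diagram $\mathcal{K}$ and width $w>0$, the folded ribbon knot $\mathcal{K}_{w,F}$ is a flat strip of width $w$ centred on $\mathcal{K}$ (boundary parallel to and at distance $w/2$ from each edge), folded at each vertex along a fold line through the vertex perpendicular to the bisector of the angle between the adjacent edges; formally a piecewise-linear immersion of an annulus or Möbius band whose only singularities are pairwise disjoint fold lines, with consistent crossing information. The fold angle at a vertex is the angle in $[0,\pi]$ between the two adjacent edges. With $\mathcal{K}$ oriented, at vertex $v_i$ with incoming edge $e_{i-1}$ and outgoing edge $e_i$, the fold is a left (resp. right) fold if $e_i$ turns left (resp. right) of $e_{i-1}$; it is an underfold if the layer of ribbon along $e_i$ lies beneath the layer along $e_{i-1}$ in the fold, an overfold otherwise. The boundary of the ribbon is oriented parallel to $\mathcal{K}$, crossings between the knot diagram and the boundary are signed $\pm1$ by the right-hand rule, and the ribbon linking number is the linking number of the knot diagram with one boundary component of the ribbon (one half the sum of the crossing signs with that component). *)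

From HB Require Import structures.
From mathcomp Require Import all_boot all_order all_algebra.
From mathcomp Require Import all_classical all_reals all_analysis.
Set Implicit Arguments. Unset Strict Implicit. Unset Printing Implicit Defensive.
Import Order.TTheory GRing.Theory Num.Theory.
Local Open Scope ring_scope.
Local Open Scope classical_set_scope.

Section FoldGeometry.
Variable R : realType.
Local Notation pt := (R * R)%type.

Definition addp (p q : pt) : pt := (p.1 + q.1, p.2 + q.2).
Definition subp (p q : pt) : pt := (p.1 - q.1, p.2 - q.2).
Definition oppp (p : pt) : pt := (- p.1, - p.2).
Definition scalep (t : R) (p : pt) : pt := (t * p.1, t * p.2).
Definition dotp (p q : pt) : R := p.1 * q.1 + p.2 * q.2.
Definition crossp (p q : pt) : R := p.1 * q.2 - p.2 * q.1.
Definition vnorm (p : pt) : R := Num.sqrt (dotp p p).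

(* The fold at vertex v: incoming edge e_{i-1} has direction d1 (so the
   previous vertex lies in direction -d1 from v), outgoing edge e_i has
   direction d2.  The fold angle is the angle in [0,pi] between the two
   edges adjacent to v, i.e. between the vectors -d1 and d2 issued from v. *)
Definition fold_angle (d1 d2 : pt) : R :=
  acos (dotp (oppp d1) d2 / (vnorm d1 * vnorm d2)).

Definition left_fold (d1 d2 : pt) : bool := 0 < crossp d1 d2.

(* the two layers of ribbon meeting at the fold *)
Inductive layer := Lin (* along e_{i-1} *) | Lout (* along e_i *).

Definition ldir (d1 d2 : pt) (X : layer) : pt :=
  match X with Lin => d1 | Lout => d2 end.

Definition lnormal (d : pt) : pt := (- d.2 / vnorm d, d.1 / vnorm d).

Definition bisector (d1 d2 : pt) : pt :=
  addp (scalep (vnorm d1)^-1 (oppp d1)) (scalep (vnorm d2)^-1 d2).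

(* fold line: through v, perpendicular to the bisector; both layers lie on
   the side of the fold line containing the edges. *)
Definition fold_side (v d1 d2 : pt) : set pt :=
  [set p | 0 <= dotp (bisector d1 d2) (subp p v)].

Definition knot_piece (v d1 d2 : pt) (X : layer) : set pt :=
  match X with
  | Lin => [set p | exists2 t : R, 0 <= t & p = subp v (scalep t d1)]
  | Lout => [set p | exists2 t : R, 0 <= t & p = addp v (scalep t d2)]
  end.

Definition layer_region (v d1 d2 : pt) (w : R) (X : layer) : set pt :=
  [set p | `|dotp (lnormal (ldir d1 d2 X)) (subp p v)| <= w / 2]
  `&` fold_side v d1 d2.

(* It is oriented
   parallel to the knot, i.e. with direction ldir d1 d2 X. *)
Definition boundary_piece (v d1 d2 : pt) (w : R) (X : layer) (s : bool) : set pt :=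
  [set p | dotp (lnormal (ldir d1 d2 X)) (subp p v) = (if s then w / 2 else - (w / 2))]
  `&` fold_side v d1 d2.

Definition fold_intersections (v d1 d2 : pt) (w : R) : set pt :=
  [set p | exists X Y s, knot_piece v d1 d2 X p /\ boundary_piece v d1 d2 w Y s p].

(* underfold (under = true): the layer along e_i lies beneath the layer along
   e_{i-1}; so the top layer is Lin for an underfold, Lout for an overfold. *)
Definition top_layer (under : bool) : layer := if under then Lin else Lout.

Definition layer_eqb (X Y : layer) : bool :=
  match X, Y with Lin, Lin | Lout, Lout => true | _, _ => false end.

(* sign (right-hand rule) of the crossing of the knot strand lying on layer X
   with the boundary strand lying on layer Y: +1 iff, looking along the over
   strand, the under strand passes from right to left, i.e.
   sg (over_direction x under_direction).  0 if there is no crossing (X = Y). *)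
Definition crossing_sign (d1 d2 : pt) (under : bool) (X Y : layer) : R :=
  if layer_eqb X Y then 0
  else if layer_eqb (top_layer under) X
       then Num.sg (crossp (ldir d1 d2 X) (ldir d1 d2 Y))
       else Num.sg (crossp (ldir d1 d2 Y) (ldir d1 d2 X)).

Definition predicted_sign (d1 d2 : pt) (under : bool) : R :=
  if left_fold d1 d2 then (if under then 1 else -1)
  else (if under then -1 else 1).

End FoldGeometry.

From HB Require Import structures.
From mathcomp Require Import all_boot all_order all_algebra.
From mathcomp Require Import all_classical all_reals all_analysis.
From mathcomp Require Import ring lra.
Import Order.TTheory GRing.Theory Num.Theory.
Local Open Scope ring_scope.
Local Open Scope classical_set_scope.

(* Parametrise the incoming strand as v - t d1 and the outgoing one as
   v + t d2 (t >= 0).  A point of the strand on layer X lies at signed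
   distance t * k(X, Y) from the centre line of layer Y, where k(X, X) = 0 and
   k(X, Y) = (d1 x d2) / |d_Y| otherwise.  Hence a strand never meets the
   boundary of its own layer, and meets each boundary line of the other layer
   at most once, exactly when the side s matches the sign of d1 x d2: this
   gives the two intersection points.  A non-degenerate fold angle is exactly
   d1 x d2 <> 0, and the crossing sign of the two distinct layers is then
   sg (d1 x d2) up to a sign fixed by which layer is on top, which is the
   table. *)

Section PlaneVectors.
Context {R : realType}.
Implicit Types d : R * R.

Lemma dotpp_ge0 d : 0 <= dotp d d.
Proof. by rewrite /dotp addr_ge0 // -expr2 sqr_ge0. Qed.

Lemma dotpp_gt0 d : d <> (0, 0) -> 0 < dotp d d.
Proof.
case: d => a b /= d_neq0; rewrite lt_def dotpp_ge0 andbT /dotp /=.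
rewrite paddr_eq0 -?expr2 ?sqr_ge0 // !sqrf_eq0.
by apply/negP => /andP[/eqP a0 /eqP b0]; apply: d_neq0; rewrite a0 b0.
Qed.

Lemma vnorm_gt0 {d} : d <> (0, 0) -> 0 < vnorm d.
Proof. by move=> d_neq0; rewrite /vnorm sqrtr_gt0 dotpp_gt0. Qed.

Lemma sqr_vnorm d : vnorm d ^+ 2 = dotp d d.
Proof. exact/sqr_sqrtr/dotpp_ge0. Qed.

Lemma crosspC (d1 d2 : R * R) : crossp d2 d1 = - crossp d1 d2.
Proof. by rewrite /crossp; ring. Qed.

Lemma lagrange_identity (d1 d2 : R * R) :
  dotp d1 d2 ^+ 2 + crossp d1 d2 ^+ 2 = dotp d1 d1 * dotp d2 d2.
Proof. by case: d1 d2 => a b [c e]; rewrite /dotp /crossp /=; ring. Qed.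

Lemma dotp_le_vnorm (d1 d2 : R * R) : dotp d1 d2 <= vnorm d1 * vnorm d2.
Proof.
rewrite (le_trans (ler_norm _)) // -sqrtr_sqr /vnorm -sqrtrM ?dotpp_ge0 //.
by rewrite -lagrange_identity ler_wsqrtr // lerDl sqr_ge0.
Qed.

Lemma fold_angle_crossp_neq0 {d1 d2 : R * R} : d1 <> (0, 0) -> d2 <> (0, 0) ->
  0 < fold_angle d1 d2 < pi -> crossp d1 d2 != 0.
Proof.
move=> /vnorm_gt0 n1_gt0 /vnorm_gt0 n2_gt0 /andP[angle_gt0 angle_ltpi].
apply/negP => /eqP cross0.
have n12_neq0 : vnorm d1 * vnorm d2 != 0 by rewrite mulf_neq0 // gt_eqF.
have : dotp d1 d2 ^+ 2 = (vnorm d1 * vnorm d2) ^+ 2.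
  by rewrite exprMn !sqr_vnorm -lagrange_identity cross0 expr0n addr0.
move/eqP; rewrite eqf_sqr => /orP[] /eqP dotp_eq;
  move: angle_gt0 angle_ltpi; rewrite /fold_angle;
  have -> : dotp (oppp d1) d2 = - dotp d1 d2 by rewrite /dotp /=; ring.
- by rewrite dotp_eq mulNr mulfV // acosN1 ltxx.
- by rewrite dotp_eq opprK mulfV // acos1 ltxx.
Qed.

End PlaneVectors.

Lemma ge0_mulr_eq_signedP (R : realFieldType) (h k t : R) (s : bool) :
  0 < h -> k != 0 ->
  (0 <= t /\ t * k = (if s then h else - h)) <-> (t = h / `|k| /\ s = (0 < k)).
Proof.
move=> h_gt0 k_neq0; split => [[t_ge0 tk_eq]|[-> ->]].
- have tk_norm : t * `|k| = h.
    by rewrite -(ger0_norm t_ge0) -normrM tk_eq; case: ifP; rewrite ?normrN gtr0_norm.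
  split; first by rewrite -tk_norm mulfK // normr_eq0.
  have [k_lt0|k_gt0|] := ltgtP k 0; last by move/eqP: k_neq0.
  + case: s tk_eq => // tk_eq.
    by have := mulr_ge0_le0 t_ge0 (ltW k_lt0); lra.
  + case: s tk_eq => // tk_eq.
    by have := mulr_ge0 t_ge0 (ltW k_gt0); lra.
- split; first by rewrite divr_ge0 ?normr_ge0 ?ltW.
  have [k_lt0|k_gt0|] := ltgtP k 0; last by move/eqP: k_neq0.
  + by rewrite ltr0_norm //; field.
  + by rewrite gtr0_norm //; field; rewrite gt_eqF.
Qed.

Section Fold.
Context {R : realType} {v d1 d2 : R * R} {w : R}.
Hypotheses (d1_neq0 : d1 <> (0, 0)) (d2_neq0 : d2 <> (0, 0)).
Hypotheses (cross_neq0 : crossp d1 d2 != 0) (w_gt0 : 0 < w).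

Definition other_layer (X : layer) : layer :=
  match X with Lin => Lout | Lout => Lin end.

Definition knot_point (X : layer) (t : R) : R * R :=
  match X with
  | Lin => subp v (scalep t d1)
  | Lout => addp v (scalep t d2)
  end.

Definition knot_offset (X Y : layer) : R :=
  if layer_eqb X Y then 0 else crossp d1 d2 / vnorm (ldir d1 d2 Y).

Definition crossing_param (X : layer) : R :=
  w / 2 / `|knot_offset X (other_layer X)|.

Definition crossing_point (X : layer) : R * R := knot_point X (crossing_param X).

Lemma layer_eq_or_other (X Y : layer) : Y = X \/ Y = other_layer X.
Proof. by case: X Y => [] []; [left|right|right|left]. Qed.

Lemma knot_pieceE (X : layer) :
  knot_piece v d1 d2 X = [set p | exists2 t, 0 <= t & p = knot_point X t].
Proof. by case: X. Qed.

Lemma ldir_neq0 (X : layer) : ldir d1 d2 X <> (0, 0).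
Proof. by case: X. Qed.

Lemma knot_offset_other_neq0 (X : layer) : knot_offset X (other_layer X) != 0.
Proof.
by rewrite /knot_offset; case: X; rewrite /= mulf_neq0 // invr_eq0 gt_eqF // vnorm_gt0.
Qed.

Lemma offset_knot_point (X Y : layer) (t : R) :
  dotp (lnormal (ldir d1 d2 Y)) (subp (knot_point X t) v) = t * knot_offset X Y.
Proof.
rewrite /knot_offset /lnormal /crossp /knot_point.
case: v d1 d2 X Y => [x y] [a b] [c e] [] [] /=;
  by rewrite /dotp /subp /addp /scalep /=; ring.
Qed.

Lemma knot_point_fold_side (X : layer) (t : R) :
  0 <= t -> fold_side v d1 d2 (knot_point X t).
Proof.
move=> t_ge0; rewrite /fold_side /=.
have bisectorE : dotp (bisector d1 d2) (subp (knot_point X t) v) =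
    t * (dotp (ldir d1 d2 X) (ldir d1 d2 X) / vnorm (ldir d1 d2 X)
         - dotp d1 d2 / vnorm (ldir d1 d2 (other_layer X))).
  rewrite /bisector /knot_point; case: v d1 d2 X => [x y] [a b] [c e] [] /=;
    by rewrite /dotp /subp /addp /scalep /oppp /=; ring.
have nX_gt0 := vnorm_gt0 (ldir_neq0 X).
have nY_gt0 := vnorm_gt0 (ldir_neq0 (other_layer X)).
rewrite bisectorE -sqr_vnorm expr2 mulfK ?gt_eqF // mulr_ge0 //.
rewrite subr_ge0 ler_pdivrMr //.
by case: X {bisectorE nX_gt0 nY_gt0} => /=; rewrite ?[vnorm d2 * _]mulrC dotp_le_vnorm.
Qed.

Lemma boundary_knot_pointE (X Y : layer) (s : bool) (t : R) : 0 <= t ->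
  boundary_piece v d1 d2 w Y s (knot_point X t) <->
  t * knot_offset X Y = (if s then w / 2 else - (w / 2)).
Proof.
move=> t_ge0; rewrite /boundary_piece /= offset_knot_point.
by split => [[]|->] //; split => //; exact: knot_point_fold_side.
Qed.

Lemma signed_half_width_neq0 (s : bool) : (if s then w / 2 else - (w / 2)) != 0.
Proof. by case: s; rewrite ?oppr_eq0 gt_eqF ?divr_gt0. Qed.

Lemma crossing_paramP (X : layer) (s : bool) (t : R) :
  (0 <= t /\ t * knot_offset X (other_layer X) = (if s then w / 2 else - (w / 2)))
  <-> (t = crossing_param X /\ s = (0 < knot_offset X (other_layer X))).
Proof. by apply: ge0_mulr_eq_signedP (knot_offset_other_neq0 X); rewrite divr_gt0. Qed.

Lemma crossing_param_ge0 (X : layer) : 0 <= crossing_param X.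
Proof. by have [] := (crossing_paramP X _ _).2 (conj erefl erefl). Qed.

Lemma crossing_param_offset (X : layer) :
  crossing_param X * knot_offset X (other_layer X) =
  (if 0 < knot_offset X (other_layer X) then w / 2 else - (w / 2)).
Proof. by have [] := (crossing_paramP X _ _).2 (conj erefl erefl). Qed.

Lemma knot_boundary_meetE {X Y : layer} {s : bool} {p : R * R} :
  knot_piece v d1 d2 X p -> boundary_piece v d1 d2 w Y s p ->
  Y = other_layer X /\ p = crossing_point X.
Proof.
rewrite knot_pieceE => -[t t_ge0 ->] /(boundary_knot_pointE _ _ _ _ t_ge0).
have [-> | -> offset_eq] := layer_eq_or_other X Y.
  have -> : knot_offset X X = 0 by rewrite /knot_offset; case: X.
  by rewrite mulr0 => /esym/eqP; rewrite (negPf (signed_half_width_neq0 s)).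
by have [-> _] := (crossing_paramP X s t).1 (conj t_ge0 offset_eq).
Qed.

Lemma crossing_point_intersection (X : layer) :
  fold_intersections v d1 d2 w (crossing_point X).
Proof.
exists X, (other_layer X), (0 < knot_offset X (other_layer X)); split.
  by rewrite knot_pieceE; exists (crossing_param X); rewrite ?crossing_param_ge0.
by apply/boundary_knot_pointE; rewrite ?crossing_param_ge0 ?crossing_param_offset.
Qed.

Lemma crossing_points_neq : crossing_point Lin <> crossing_point Lout.
Proof.
move=> /(congr1 (fun p => dotp (lnormal (ldir d1 d2 Lin)) (subp p v))).
rewrite !offset_knot_point crossing_param_offset /knot_offset /= mulr0.
by move/esym/eqP; rewrite (negPf (signed_half_width_neq0 _)).
Qed.

Lemma fold_intersectionsE :
  fold_intersections v d1 d2 w = [set crossing_point Lin; crossing_point Lout].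
Proof.
apply/seteqP; split => [p [X [Y [s [knot_p boundary_p]]]] | p [] ->].
- have [_ ->] := knot_boundary_meetE knot_p boundary_p.
  by case: X {knot_p boundary_p}; [left | right].
- exact: crossing_point_intersection.
- exact: crossing_point_intersection.
Qed.

Lemma fold_intersections_pair :
  exists P1 P2 : R * R, P1 <> P2 /\ fold_intersections v d1 d2 w = [set P1; P2].
Proof.
exists (crossing_point Lin), (crossing_point Lout).
by split; [exact: crossing_points_neq | exact: fold_intersectionsE].
Qed.

End Fold.

Lemma crossing_sign_other (R : realType) (d1 d2 : R * R) (under : bool) (X : layer) :
  crossp d1 d2 != 0 ->
  crossing_sign d1 d2 under X (other_layer X) = predicted_sign d1 d2 under.
Proof.
move=> cross_neq0; rewrite /crossing_sign /predicted_sign /left_fold.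
have cross21 := crosspC d1 d2.
have [c_lt0|c_gt0|/eqP] := ltgtP (crossp d1 d2) 0; last by rewrite (negPf cross_neq0).
- by case: X; case: under; rewrite /= ?cross21 ?sgrN ltr0_sg ?opprK.
- by case: X; case: under; rewrite /= ?cross21 ?sgrN gtr0_sg.
Qed.

Theorem lemma4p1 (R : realType) (v d1 d2 : R * R) (w : R) (under : bool) :
  0 < w -> d1 <> (0, 0) -> d2 <> (0, 0) ->
  0 < fold_angle d1 d2 < pi ->
  (exists P1 P2 : R * R,
      P1 <> P2 /\ fold_intersections v d1 d2 w = [set P1; P2]) /\
  (forall (X Y : layer) (s : bool) (p : R * R),
      knot_piece v d1 d2 X p -> boundary_piece v d1 d2 w Y s p ->
      crossing_sign d1 d2 under X Y = predicted_sign d1 d2 under).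
Proof.
move=> w_gt0 d1_neq0 d2_neq0 angle_nondegenerate.
have cross_neq0 := fold_angle_crossp_neq0 d1_neq0 d2_neq0 angle_nondegenerate.
split; first exact: fold_intersections_pair d1_neq0 d2_neq0 cross_neq0 w_gt0.
move=> X Y s p knot_p boundary_p.
have [-> _] := knot_boundary_meetE d1_neq0 d2_neq0 cross_neq0 w_gt0 knot_p boundary_p.
exact: crossing_sign_other.
Qed.
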